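(* Let $G$ be a loopy graph with $\mathrm{vm}(G)=k$ which is edge-maximal with respect to this property, i.e. adding to $G$ any edge not already in $G$ (between vertices of $G$, loops included) yields a graph with vertex-maximal matching number different from $k$. Let $\ell=\lambda(G)$ be the number of loops of $G$. Then $G$ contains $LK_\ell$; that is, the loopy vertices of $G$ are pairwise adjacent.
   Context: A loopy graph is a finite graph with no isolated vertices and no multiple edges, possibly with loops. A vertex is loopy if it carries a loop; $\lambda(G)$ is the number of loops (= number of loopy vertices). A matching is a set of pairwise vertex-disjoint edges, loops allowed; $\mathrm{vm}(G)$ is the maximum number of vertices touched by a matching of $G$. $LK_\ell$ denotes the complete graph $K_\ell$ with a loop attached at each vertex. *)

From mathcomp Require Import all_boot.
Set Implicit Arguments. Unset Strict Implicit. Unset Printing Implicit Defensive.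

(* A loopy graph on a finite vertex type T is given by its edge set
   E : {set {set T}}; an edge is a vertex set of size 2 (ordinary edge)
   or of size 1 (a loop).  Sets make multiple edges impossible. *)
Definition is_edge (T : finType) (e : {set T}) : bool :=
  (#|e| == 1) || (#|e| == 2).

Definition loopy_graph (T : finType) (E : {set {set T}}) : bool :=
  [forall e in E, is_edge e] && (cover E == [set: T]).

Definition is_matching (T : finType) (E M : {set {set T}}) : bool :=
  (M \subset E) && trivIset M.

Definition vm (T : finType) (E : {set {set T}}) : nat :=
  \max_(M in powerset E | trivIset M) #|cover M|.

Definition loopy (T : finType) (E : {set {set T}}) (x : T) : bool :=
  [set x] \in E.

Definition nloops (T : finType) (E : {set {set T}}) : nat :=
  #|[set x | loopy E x]|.

From mathcomp Require Import all_boot.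

(* Replacing the edge {x, y} of a matching by the loops at x and y touches
   the same vertices, so adding an edge between loopy vertices never changes
   vm.  An edge-maximal graph therefore already contains every such edge. *)

Section VertexMatchings.

Context {T : finType}.
Implicit Types (E M : {set {set T}}) (A e : {set T}).

Lemma trivIset_singletons A : trivIset [set [set z] | z in A].
Proof.
apply/trivIsetP => _ _ /imsetP[u _ ->] /imsetP[v _ ->] neq_uv.
by rewrite disjoints1 in_set1; apply: contra neq_uv => /eqP->.
Qed.

Lemma cover_singletons A : cover [set [set z] | z in A] = A.
Proof.
apply/setP => z; apply/bigcupP/idP => [[_ /imsetP[u Au ->]]|Az].
  by rewrite in_set1 => /eqP->.
by exists [set z]; rewrite ?set11 ?imset_f.
Qed.

Section Refinement.

Context {M P : {set {set T}}} {e : {set T}}.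
Hypotheses (tiM : trivIset M) (Me : e \in M) (tiP : trivIset P) (coverP : cover P = e).

Lemma trivIset_refine : trivIset (P :|: (M :\ e)).
Proof.
apply: trivIsetU => //; first exact: trivIsetD.
rewrite coverP; apply: bigcup_disjoint => A /setD1P[neq_Ae MA].
by apply: (trivIsetP tiM); rewrite // eq_sym.
Qed.

Lemma cover_refine : cover (P :|: (M :\ e)) = cover M.
Proof.
rewrite /cover bigcup_setU -/(cover P) -/(cover (M :\ e)) coverP coverD1 //.
by rewrite setDE setUIr setUCr setIT; apply/setUidPr/bigcup_sup.
Qed.

End Refinement.

Lemma vmS E1 E2 : E1 \subset E2 -> vm E1 <= vm E2.
Proof.
move=> sE12; apply/bigmax_leqP => M /andP[]; rewrite powersetE => sME1 tiM.
by apply: leq_bigmax_cond; rewrite powersetE tiM andbT (subset_trans sME1).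
Qed.

Lemma leq_cover_vm E M : is_matching E M -> #|cover M| <= vm E.
Proof. by case/andP=> sME tiM; apply: leq_bigmax_cond; rewrite powersetE sME. Qed.

Lemma vm_setU1_loopy E e : {in e, forall z, loopy E z} -> vm (e |: E) = vm E.
Proof.
move=> loopy_e; apply/anti_leq; rewrite (vmS _ _ (subsetUr _ _)) andbT.
apply/bigmax_leqP => M /andP[]; rewrite powersetE => sMeE tiM.
have [Me|notMe] := boolP (e \in M); last first.
  apply: leq_cover_vm; rewrite /is_matching tiM andbT.
  apply/subsetP => A MA; move/subsetP/(_ A MA): sMeE; rewrite in_setU1.
  by case/predU1P=> // Ae; rewrite -Ae MA in notMe.
have coverL := cover_singletons e.
rewrite -(cover_refine tiM Me coverL); apply: leq_cover_vm; apply/andP; split.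
  apply/subsetP => A /setUP[/imsetP[z ez ->]|/setD1P[neq_Ae MA]]; first exact: loopy_e.
  by move/subsetP/(_ A MA): sMeE; rewrite in_setU1 (negbTE neq_Ae).
exact: trivIset_refine tiM Me (trivIset_singletons e) coverL.
Qed.

End VertexMatchings.

Theorem proposition3p8 (T : finType) (E : {set {set T}}) (k : nat) :
  loopy_graph E ->
  vm E = k ->
  (forall e : {set T}, is_edge e -> e \notin E -> vm (e |: E) <> k) ->
  forall x y : T, loopy E x -> loopy E y -> x != y -> [set x; y] \in E.
Proof.
move=> _ vmE maximal x y loopy_x loopy_y neq_xy; apply/negPn/negP => notE.
apply: (maximal _ _ notE); first by rewrite /is_edge cards2 neq_xy orbT.
by rewrite -vmE vm_setU1_loopy // => z /set2P[]->.
Qed.
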